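(* Let \(A\) be a geometrically fast set of positive bumps with a fixed marking witnessing this. If \(s\neq t\) are points of \(I\) both having trivial history, then the orbits \(s\langle A\rangle\) and \(t\langle A\rangle\) are disjoint.
   Context: \(I=[0,1]\); homeomorphisms act on the right. A positive bump is an element of \(\operatorname{Homeo}_+(I)\) whose support \(\{t:ta\neq t\}\) is a single open interval \((x,y)\) on which \(ta>t\); \(x\), \(y\) are its left and right transition points. \(A\) is geometrically proper if no point is a left transition point of two distinct elements, nor a right transition point of two distinct elements. A marking assigns each \(a\in A\) a marker \(t\in\operatorname{supt}(a)\); for \(a\) with support \((x,y)\), \(\operatorname{src}(a)=(x,t)\), \(\operatorname{dest}(a)=[ta,y)\), \(\operatorname{dest}(a^{-1})=\operatorname{src}(a)\). \(A\) is geometrically fast if geometrically proper and the marking makes all these intervals pairwise disjoint. A point \(t\in I\) has trivial history if \(t\notin\operatorname{dest}(a)\) for every \(a\in A\cup A^{-1}\). \(s\langle A\rangle=\{sg: g\in\langle A\rangle\}\). *)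

From Stdlib Require Import Reals Relations.
Open Scope R_scope.

Definition inI (t : R) : Prop := 0 <= t <= 1.

(* A map R -> R is used as a representative of a self-map of I; only its
   values on I matter.  Homeomorphisms act on the right: "t a" is [a t]. *)
Definition homeo_plus (a : R -> R) : Prop :=
  (forall t, inI t -> inI (a t)) /\
  (forall s t, inI s -> inI t -> s < t -> a s < a t) /\
  (forall u, inI u -> exists t, inI t /\ a t = u) /\
  (forall t, inI t -> forall eps, 0 < eps -> exists delta, 0 < delta /\
     forall u, inI u -> Rabs (u - t) < delta -> Rabs (a u - a t) < eps).

Definition same_homeo (a b : R -> R) : Prop := forall t, inI t -> a t = b t.

Definition is_bump (a : R -> R) (x y : R) : Prop :=
  homeo_plus a /\ 0 <= x /\ x < y /\ y <= 1 /\
  (forall t, inI t -> (a t <> t <-> x < t < y)) /\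
  (forall t, x < t < y -> a t > t).

Definition positive_bump (a : R -> R) : Prop := exists x y, is_bump a x y.

Definition geom_proper (A : (R -> R) -> Prop) : Prop :=
  forall a b x y x' y', A a -> A b -> is_bump a x y -> is_bump b x' y' ->
    (x = x' \/ y = y') -> same_homeo a b.

Definition is_marking (A : (R -> R) -> Prop) (m : (R -> R) -> R) : Prop :=
  forall a, A a -> exists x y, is_bump a x y /\ x < m a < y.

(* src(a) = (x, m a) ; dest(a) = [ (m a) a, y ) ; dest(a^-1) = src(a). *)
Definition in_src (m : (R -> R) -> R) (a : R -> R) (t : R) : Prop :=
  exists x y, is_bump a x y /\ x < t < m a.
Definition in_dest (m : (R -> R) -> R) (a : R -> R) (t : R) : Prop :=
  exists x y, is_bump a x y /\ a (m a) <= t < y.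

Definition geom_fast_marking (A : (R -> R) -> Prop) (m : (R -> R) -> R) : Prop :=
  geom_proper A /\ is_marking A m /\
  (forall a t, A a -> ~ (in_src m a t /\ in_dest m a t)) /\
  (forall a b t, A a -> A b -> ~ same_homeo a b ->
     ~ (in_src m a t /\ in_src m b t) /\ ~ (in_src m a t /\ in_dest m b t) /\
     ~ (in_dest m a t /\ in_src m b t) /\ ~ (in_dest m a t /\ in_dest m b t)).

(* t has trivial history: t is in no dest(a), a in A ∪ A^-1. *)
Definition trivial_history (A : (R -> R) -> Prop) (m : (R -> R) -> R) (t : R) : Prop :=
  inI t /\ forall a, A a -> ~ in_dest m a t /\ ~ in_src m a t.

Definition orbit_step (A : (R -> R) -> Prop) (u v : R) : Prop :=
  inI u /\ inI v /\ exists a, A a /\ (v = a u \/ u = a v).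

(* v in u<A> : v = u g for some g in the group generated by A. *)
Definition in_orbit (A : (R -> R) -> Prop) (u v : R) : Prop :=
  inI u /\ clos_refl_trans R (orbit_step A) u v.

(* Call a move u -> u a^-1 when u lies in dest(a), and u -> u a when u lies
   in src(a), a peeling move.  Since the intervals src(a), dest(a) are
   pairwise disjoint, every point has at most one peeling move, and points
   with trivial history have none.  Each generator step u -> u a^(+-1) is a
   peeling move in one direction or the other (or fixes u), so from any point
   of the orbit of a trivial-history point s the peeling moves lead back to s.
   Peeling being deterministic, two trivial-history points of a common orbit
   coincide. *)

From Stdlib Require Import Reals Relations Lra.
From Stdlib Require Import ClassicalEpsilon FunctionalExtensionality PropExtensionality.
Open Scope R_scope.

Section FunctionalRelation.

Variable T : Type.
Variable P : relation T.

Definition terminal (s : T) : Prop := forall w, ~ P s w.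

Hypothesis P_functional : forall u v w, P u v -> P u w -> v = w.

Lemma rt_functional_step u v s :
  P u v -> clos_refl_trans T P u s -> terminal s -> clos_refl_trans T P v s.
Proof.
  intros Puv Hus Ts. apply clos_rt_rt1n in Hus.
  destruct Hus as [|w s' Puw Hws].
  - exfalso; apply (Ts v Puv).
  - rewrite (P_functional u v w Puv Puw). apply clos_rt1n_rt; exact Hws.
Qed.

Lemma rt_terminal_unique u s t :
  clos_refl_trans T P u s -> clos_refl_trans T P u t ->
  terminal s -> terminal t -> s = t.
Proof.
  intros Hus Hut Ts Tt. apply clos_rt_rt1n in Hus.
  revert t Hut Tt. induction Hus as [u|u w s Puw Hws IH]; intros t Hut Tt.
  - apply clos_rt_rt1n in Hut. destruct Hut as [|w t' Puw _]; [reflexivity|].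
    exfalso; apply (Ts w Puw).
  - apply IH; [exact Ts| |exact Tt]. apply (rt_functional_step u); assumption.
Qed.

Variable S : relation T.
Hypothesis S_peels : forall u v, S u v -> P u v \/ P v u \/ u = v.

Lemma rt_undo s u :
  clos_refl_trans T S s u -> terminal s -> clos_refl_trans T P u s.
Proof.
  intros Hsu Ts. apply clos_rt_rtn1 in Hsu.
  induction Hsu as [|u v Suv _ IH]; [apply rt_refl|].
  destruct (S_peels u v Suv) as [Puv|[Pvu|<-]].
  - apply (rt_functional_step u); assumption.
  - apply rt_trans with u; [apply rt_step|]; assumption.
  - exact IH.
Qed.

End FunctionalRelation.

Section Bump.

Variables (b : R -> R) (x y : R).
Hypothesis Hb : is_bump b x y.

Lemma bump_inI t : inI t -> inI (b t).
Proof. destruct Hb as ((Hmap & _) & _). apply Hmap. Qed.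

Lemma bump_increasing s t : inI s -> inI t -> s < t -> b s < b t.
Proof. destruct Hb as ((_ & Hmono & _) & _). apply Hmono. Qed.

Lemma bump_nondecreasing s t : inI s -> inI t -> s <= t -> b s <= b t.
Proof.
  intros Hs Ht [Lst|<-]; [left; apply bump_increasing|right]; auto.
Qed.

Lemma bump_injective s t : inI s -> inI t -> b s = b t -> s = t.
Proof.
  intros Hs Ht E. destruct (Rtotal_order s t) as [L|[L|L]]; [|exact L|].
  - pose proof (bump_increasing s t Hs Ht L); lra.
  - pose proof (bump_increasing t s Ht Hs L); lra.
Qed.

Lemma bump_fixed_outside t : inI t -> ~ (x < t < y) -> b t = t.
Proof.
  intros Ht Hout. destruct (Req_dec (b t) t) as [E|E]; [exact E|].
  destruct Hb as (_ & _ & _ & _ & Hsupp & _).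
  exfalso; apply Hout, (Hsupp t Ht), E.
Qed.

End Bump.

Section Peeling.

Variables (A : (R -> R) -> Prop) (m : (R -> R) -> R).

(* The marking depends on the representative R -> R, not only on the
   homeomorphism of I it induces, and geometric fastness only separates
   inequivalent elements; so peeling uses one fixed representative per class. *)
Definition canon (a : R -> R) : R -> R :=
  epsilon (inhabits (fun t : R => t)) (fun c => A c /\ same_homeo a c).

Lemma canon_spec a : A a -> A (canon a) /\ same_homeo a (canon a).
Proof.
  intros Ha. unfold canon. apply epsilon_spec. exists a. split; [exact Ha|]. intros t _; reflexivity.
Qed.

Lemma canon_same a b : same_homeo a b -> canon a = canon b.
Proof.
  intros Hab. unfold canon. f_equal. apply functional_extensionality; intros c.
  apply propositional_extensionality.
  split; intros [Hc Hsame]; split; auto; intros t Ht; rewrite <- Hsame by exact Ht;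
    [rewrite Hab | rewrite <- Hab]; auto.
Qed.

Lemma canon_idem a : A a -> canon (canon a) = canon a.
Proof.
  intros Ha. apply canon_same. intros t Ht. symmetry. apply (proj2 (canon_spec a Ha) t Ht).
Qed.

Definition peel (u w : R) : Prop :=
  inI w /\ exists a, A a /\ canon a = a /\
    ((in_dest m a u /\ u = a w) \/ (in_src m a u /\ w = a u)).

Lemma trivial_history_terminal s : trivial_history A m s -> terminal R peel s.
Proof.
  intros [_ Hhist] w (_ & a & Ha & _ & Hmove). destruct (Hhist a Ha). tauto.
Qed.

Lemma peel_functional :
  geom_fast_marking A m -> forall u v w, peel u v -> peel u w -> v = w.
Proof.
  intros (_ & _ & Hself & Hpair) u v w (Hv & a & Ha & Ca & Hmv) (Hw & b & Hb & Cb & Hmw).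
  destruct (classic (same_homeo a b)) as [Hab|Hab].
  - assert (a = b) as <- by (rewrite <- Ca, <- Cb; apply canon_same, Hab).
    destruct Hmv as [[Dv Ev]|[Sv Ev]], Hmw as [[Dw Ew]|[Sw Ew]];
      try (exfalso; apply (Hself a u Ha); tauto).
    + destruct Dv as (x & y & Bxy & _).
      apply (bump_injective a x y); congruence.
    + congruence.
  - exfalso. destruct (Hpair a b u Ha Hb Hab) as (N1 & N2 & N3 & N4).
    destruct Hmv as [[]|[]], Hmw as [[]|[]]; tauto.
Qed.

Lemma peel_generator_step b u :
  is_marking A m -> A b -> canon b = b -> inI u ->
  peel u (b u) \/ peel (b u) u \/ b u = u.
Proof.
  intros Hmark Hb Cb Hu.
  destruct (Hmark b Hb) as (x & y & Bxy & Hxm & Hmy).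
  pose proof Bxy as (_ & Hx & Hxy & Hy & _).
  destruct (classic (x < u < y)) as [Hin|Hout].
  2: { right; right; apply (bump_fixed_outside b x y); assumption. }
  destruct (Rlt_or_le u (m b)) as [Hlt|Hge].
  - left. split; [apply (bump_inI b x y); assumption|].
    exists b; repeat split; auto. right; split; [|reflexivity].
    exists x, y; split; [exact Bxy | lra].
  - right; left. split; [exact Hu|].
    exists b; repeat split; auto. left; split; [|reflexivity].
    exists x, y; split; [exact Bxy|split].
    + apply (bump_nondecreasing b x y); auto; unfold inI; lra.
    + rewrite <- (bump_fixed_outside b x y Bxy y) by (unfold inI; lra).
      apply (bump_increasing b x y); auto; unfold inI; lra.
Qed.

Lemma orbit_step_peels :
  is_marking A m -> forall u v, orbit_step A u v -> peel u v \/ peel v u \/ u = v.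
Proof.
  intros Hmark u v (Hu & Hv & a & Ha & Hstep).
  destruct (canon_spec a Ha) as [Hca Hsame].
  pose proof (canon_idem a Ha) as Cca.
  destruct Hstep as [Hv_def | Hu_def].
  - rewrite Hv_def, (Hsame u Hu).
    destruct (peel_generator_step (canon a) u Hmark Hca Cca Hu) as [H|[H|H]]; auto.
  - rewrite Hu_def, (Hsame v Hv).
    destruct (peel_generator_step (canon a) v Hmark Hca Cca Hv) as [H|[H|H]]; auto.
Qed.

End Peeling.

Theorem lemma5p6 (A : (R -> R) -> Prop) (m : (R -> R) -> R) (s t : R) :
  (forall a, A a -> positive_bump a) ->
  geom_fast_marking A m ->
  s <> t -> trivial_history A m s -> trivial_history A m t ->
  ~ (exists u, in_orbit A s u /\ in_orbit A t u).
Proof.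
  (* Positivity of the bumps is already part of [is_marking]. *)
  intros _ Hfast Hst Hs Ht [u [[_ Hsu] [_ Htu]]].
  pose proof Hfast as (_ & Hmark & _).
  pose proof (trivial_history_terminal A m s Hs) as Ts.
  pose proof (trivial_history_terminal A m t Ht) as Tt.
  pose proof (peel_functional A m Hfast) as Hfun.
  pose proof (orbit_step_peels A m Hmark) as Hpeels.
  apply Hst, (rt_terminal_unique R (peel A m) Hfun u); auto.
  - apply (rt_undo R (peel A m) Hfun (orbit_step A) Hpeels); assumption.
  - apply (rt_undo R (peel A m) Hfun (orbit_step A) Hpeels); assumption.
Qed.
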